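(* Let $\Pi$ and $\Pi'$ be $n$-dimensional linear spaces, both satisfying the exchange axiom and the axiom (P2), and let $0<k<n-1$. Then every injection of $\mathcal{G}_{k}(\Pi)$ to $\mathcal{G}_{k}(\Pi')$ sending base subsets to base subsets is adjacency preserving, i.e. it sends any two adjacent elements of $\mathcal{G}_k(\Pi)$ to adjacent elements of $\mathcal{G}_k(\Pi')$.
   Context: A linear space $\Pi=(P,\mathcal{L})$ is a set $P$ of points with a family $\mathcal{L}$ of proper subsets (lines) such that each line has at least two points and any two distinct points $p,q$ lie on exactly one line $pq$. A subspace is a set $S\subset P$ with $pq\subset S$ for all distinct $p,q\in S$; $\overline{X}$ is the smallest subspace containing $X$. A set $X$ is independent if $\overline{X}$ is not spanned by a proper subset of $X$; a base of a subspace $S$ is an independent set spanning $S$. A subspace is $m$-dimensional if $m+1$ is the smallest number of points spanning it. Exchange axiom: for every $X\subset P$ and $p_1,p_2\in P\setminus\overline{X}$, $p_2\in\overline{X\cup\{p_1\}}$ implies $p_1\in\overline{X\cup\{p_2\}}$. Axiom (P2): every line contains at least three points. $\mathcal{G}_k(\Pi)$ is the set of $k$-dimensional subspaces; two elements of $\mathcal{G}_k(\Pi)$ are adjacent if their intersection is $(k-1)$-dimensional. For a base $B$ of $\Pi$, the base subset of $\mathcal{G}_k(\Pi)$ associated with $B$ is the set of all $k$-dimensional subspaces spanned by points of $B$. *)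

(* Point sets are predicates [P -> Prop]; lines form a family
   [L : (P -> Prop) -> Prop]. Set equality is Leibniz equality of predicates
   (extensional via functional/propositional extensionality). *)
From Stdlib Require Import List.
Set Implicit Arguments.

Section LinearSpaces.
Variable P : Type.
Variable L : (P -> Prop) -> Prop.

Definition subset (A B : P -> Prop) : Prop := forall x, A x -> B x.

Definition linear_space : Prop :=
  (forall l, L l -> exists x, ~ l x) /\
  (forall l, L l -> exists p q, p <> q /\ l p /\ l q) /\
  (forall p q, p <> q -> exists l, L l /\ l p /\ l q /\
      forall l', L l' -> l' p -> l' q -> l' = l).

Definition subspace (S : P -> Prop) : Prop :=
  forall p q, p <> q -> S p -> S q ->
    forall l, L l -> l p -> l q -> subset l S.

Definition closure (X : P -> Prop) : P -> Prop :=
  fun x => forall S, subspace S -> subset X S -> S x.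

Definition set_of_list (s : list P) : P -> Prop := fun x => In x s.

Definition spanned_by_card (k : nat) (S : P -> Prop) : Prop :=
  exists s : list P, NoDup s /\ length s = k /\ closure (set_of_list s) = S.

Definition dim (S : P -> Prop) (m : nat) : Prop :=
  subspace S /\ spanned_by_card (Datatypes.S m) S /\
  (forall j, j < Datatypes.S m -> ~ spanned_by_card j S).

Definition Grass (k : nat) (S : P -> Prop) : Prop := dim S k.

Definition adjacent (k : nat) (S T : P -> Prop) : Prop :=
  Grass k S /\ Grass k T /\ dim (fun x => S x /\ T x) (pred k).

Definition exchange_axiom : Prop :=
  forall (X : P -> Prop) p1 p2,
    ~ closure X p1 -> ~ closure X p2 ->
    closure (fun x => X x \/ x = p1) p2 ->
    closure (fun x => X x \/ x = p2) p1.

Definition axiom_P2 : Prop :=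
  forall l, L l -> exists p q r, l p /\ l q /\ l r /\ p <> q /\ p <> r /\ q <> r.

Definition independent (X : P -> Prop) : Prop :=
  ~ exists Y, subset Y X /\ (exists x, X x /\ ~ Y x) /\ closure Y = closure X.

Definition base (B : P -> Prop) : Prop :=
  independent B /\ closure B = (fun _ => True).

Definition base_subset (k : nat) (B : P -> Prop) : (P -> Prop) -> Prop :=
  fun S => Grass k S /\ exists Y, subset Y B /\ closure Y = S.

Definition ndim (n : nat) : Prop := dim (fun _ => True) n.
End LinearSpaces.

(* Fix a base B = (p_0, ..., p_n) of Π.  Its base subset is mapped onto the base subset of a
   base B' of Π', so f induces a bijection g of the (k+1)-subsets of {0, ..., n}.  For i <> j let
   C(i,j) be the family of (k+1)-sets containing i but not j.  By (P2) the line p_i p_j has a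
   third point c, and replacing p_i by c yields a base whose base subset shares with that of B
   exactly the spans of the sets outside C(i,j).  Unless g maps C(i,j) onto some C(i',j'), every
   point of B' is cut out by images of such shared spans, so the new base has the same image
   base as B; f being injective, both bases of Π then have the same base subset, which is absurd
   since c is not in B.  Now two (k+1)-sets S, T lie together in |S ∩ T| (n + 1 - |S ∪ T|) of the
   families C(i,j), a number g cannot decrease; for |S ∩ T| = k it is k (n - k - 1), and since
   m (n + 1 - 2 (k + 1) + m) increases with m, g preserves |S ∩ T| = k.  Adjacent subspaces are
   spanned by such S and T in a suitable base. *)

From Stdlib Require Import List.
From Stdlib Require FinFun.
From mathcomp Require Import all_boot fingroup perm zify boolp.

Set Implicit Arguments.
Unset Strict Implicit.
Unset Printing Implicit Defensive.

Lemma InP (T : eqType) (x : T) (s : seq T) : reflect (In x s) (x \in s).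
Proof.
elim: s => [|y s IH] /=; first by right.
rewrite in_cons; apply: (iffP orP) => [[/eqP ->|/IH]|[->|/IH]]; by [left|right].
Qed.

Lemma uniq_NoDup (T : eqType) (s : seq T) : uniq s -> NoDup s.
Proof.
elim: s => [|y s IH] /=; first by constructor.
by case/andP => ys us; constructor; [apply/InP | apply: IH].
Qed.

Lemma exists_card_between (T : finType) (A B : {set T}) m :
  A \subset B -> #|A| <= m <= #|B| -> exists J : {set T}, [/\ #|J| = m, A \subset J & J \subset B].
Proof.
move=> AB /andP [Am mB].
have /card_geqP [s [us ss sBA]] : m - #|A| <= #|B :\: A| by rewrite cardsDS //; lia.
have As : A :&: [set x in s] = set0.
  by apply/setP => x /[!inE]; apply/negP => /andP [xA /sBA] /[!inE]; rewrite xA.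
exists (A :|: [set x in s]); split.
- by rewrite cardsU As cards0 cardsE (card_uniqP us); lia.
- exact: subsetUl.
- by rewrite subUset AB; apply/subsetP => x /[!inE] /sBA /[!inE] /andP [].
Qed.

Section Cuts.
Variables N K : nat.
Implicit Types (i j : 'I_N) (J S T : {set 'I_N}).

Definition cut i j := [set J : {set 'I_N} | [&& #|J| == K, i \in J & j \notin J]].

Lemma notin_cut i j J : #|J| = K -> (J \notin cut i j) = (i \in J) ==> (j \in J).
Proof. by move=> cJ; rewrite inE cJ eqxx /=; case: (i \in J); case: (j \in J). Qed.

Lemma card_cut_le i j i' j' : i != j -> i' != j' -> #|cut i j| <= #|cut i' j'|.
Proof.
move=> ij ij'; set a := tperm i i' j.
pose s := (tperm i i' * tperm a j')%g; have sinj : injective s := @perm_inj _ s.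
have si : s i = i'.
  rewrite permM tpermL tpermD //; last by rewrite eq_sym.
  by rewrite /a -{2}(tpermL i i') (inj_eq perm_inj) eq_sym.
have sj : s j = j' by rewrite permM tpermL.
rewrite -(card_imset _ (imset_inj sinj)).
apply/subset_leq_card/subsetP => _ /imsetP [J /[!inE] /and3P [/eqP cJ iJ jJ] ->].
by rewrite card_imset // cJ eqxx -si -sj !(mem_imset _ _ sinj) iJ jJ.
Qed.

Hypothesis K_gt1 : 1 < K.
Hypothesis KN : K + 2 <= N.

Lemma exists_in_cut i j x y : i != j -> x != j -> y != i -> x != y ->
  exists2 J, J \in cut i j & (x \in J) && (y \notin J).
Proof.
move=> ij xj yi xy.
have AB : [set i; x] \subset ~: [set j; y].
  by apply/subsetP => z /[!inE] /orP [] /eqP ->; rewrite negb_or ?ij ?xj ?xy // eq_sym yi.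
have [|J [cJ AJ JB]] := exists_card_between (m := K) AB.
  have c2 (a b : 'I_N) : #|[set a; b]| <= 2 by rewrite cards2; case: (_ != _).
  have := cardsC [set j; y]; have := c2 i x; have := c2 j y; rewrite card_ord; lia.
have out z : z \in [set j; y] -> z \notin J.
  by move=> zjy; apply/negP => /(subsetP JB); rewrite inE zjy.
have inJ z : z \in [set i; x] -> z \in J by apply: (subsetP AJ).
exists J; first by rewrite !inE cJ eqxx inJ ?out // !inE eqxx ?orbT.
by rewrite inJ ?out // !inE eqxx ?orbT.
Qed.

Lemma cut_inj i j i' j' : i != j -> i' != j' -> cut i j = cut i' j' -> i = i' /\ j = j'.
Proof.
move=> ij ij' E.
have ii' : i = i'.
  apply/eqP; apply: contraT => ii'.
  have [|J] := exists_in_cut (x := i) (y := i') ij ij _ ii'; first by rewrite eq_sym.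
  by rewrite E !inE => /and3P [_ -> _] /andP [].
subst i'; split => //; apply/eqP; apply: contraT => jj'.
have [|||J] := exists_in_cut (x := j') (y := j) ij; try by rewrite eq_sym.
by rewrite E !inE => /and3P [_ _ /negP] + /andP [].
Qed.

Definition cut_pairs S T :=
  [set p : 'I_N * 'I_N | [&& p.1 != p.2, S \in cut p.1 p.2 & T \in cut p.1 p.2]].

Lemma card_cut_pairs S T : #|S| = K -> #|T| = K ->
  #|cut_pairs S T| = #|S :&: T| * (N - #|S :|: T|).
Proof.
move=> cS cT; have -> : cut_pairs S T = setX (S :&: T) (~: (S :|: T)).
  apply/setP => -[a b]; rewrite !inE /= cS cT eqxx /=.
  case: (eqVneq a b) => [->|_]; first by case: (b \in S); case: (b \in T).
  by case: (a \in S); case: (a \in T); case: (b \in S); case: (b \in T).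
by rewrite cardsX [#|~: _|]cardsCs setCK card_ord.
Qed.

Lemma card_cut_image S T : #|[set cut p.1 p.2 | p in cut_pairs S T]| = #|cut_pairs S T|.
Proof.
apply: card_in_imset => -[a b] [c d] /[!inE] /and3P [/= ab _ _] /and3P [/= cd _ _].
by case/(cut_inj ab cd) => -> ->.
Qed.

Section InducedMap.
Variable g : {set 'I_N} -> {set 'I_N}.
Hypothesis g_card : forall J, #|J| = K -> #|g J| = K.
Hypothesis g_inj : forall J1 J2, #|J1| = K -> #|J2| = K -> g J1 = g J2 -> J1 = J2.
Hypothesis g_cut : forall i j, i != j -> exists i' j', i' != j' /\
  forall J, #|J| = K -> J \notin cut i j -> g J \notin cut i' j'.

Lemma g_onto J' : #|J'| = K -> exists2 J : {set 'I_N}, #|J| = K & g J = J'.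
Proof.
move=> cJ'; set Ks := [set J : {set 'I_N} | #|J| == K].
have gKs : g @: Ks = Ks.
  apply/eqP; rewrite eqEcard card_in_imset ?leqnn ?andbT.
    by apply/subsetP => _ /imsetP [J /[!inE] /eqP cJ ->]; rewrite g_card.
  by move=> J1 J2 /[!inE] /eqP c1 /eqP c2; apply: g_inj.
have : J' \in g @: Ks by rewrite gKs inE cJ'.
by case/imsetP => J /[!inE] /eqP cJ ->; exists J.
Qed.

Lemma imset_cut i j : i != j -> exists i' j', i' != j' /\ g @: cut i j = cut i' j'.
Proof.
move=> ij; have [i' [j' [ij' gcut]]] := g_cut ij.
exists i', j'; split => //; apply/eqP; rewrite eq_sym eqEcard; apply/andP; split.
- apply/subsetP => J' J'cut; have := J'cut; rewrite inE => /and3P [/eqP cJ' _ _].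
  have [J cJ gJ] := g_onto cJ'; subst J'.
  by apply: imset_f; apply: contraLR J'cut; exact: gcut.
- rewrite (card_in_imset (f := g) (D := cut i j)) ?card_cut_le //.
  by move=> J1 J2 /[!inE] /and3P [/eqP c1 _ _] /and3P [/eqP c2 _ _]; apply: g_inj.
Qed.

Lemma imset_g_inj (X Y : {set {set 'I_N}}) :
  (forall J, J \in X -> #|J| = K) -> (forall J, J \in Y -> #|J| = K) ->
  g @: X = g @: Y -> X = Y.
Proof.
suff sub (X' Y' : {set {set 'I_N}}) : (forall J, J \in X' -> #|J| = K) ->
    (forall J, J \in Y' -> #|J| = K) -> g @: X' = g @: Y' -> X' \subset Y'.
  by move=> cX cY E; apply/eqP; rewrite eqEsubset !sub.
move=> cX cY E; apply/subsetP => J JX.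
have /imsetP [J2 J2Y gJ] : g J \in g @: Y' by rewrite -E imset_f.
by rewrite (g_inj (cX J JX) (cY J2 J2Y) gJ).
Qed.

Lemma card_cut_pairs_le S T : #|cut_pairs S T| <= #|cut_pairs (g S) (g T)|.
Proof.
have cutK X : X \in [set cut p.1 p.2 | p in cut_pairs S T] -> forall J, J \in X -> #|J| = K.
  by case/imsetP => p _ -> J /[!inE] /and3P [/eqP].
rewrite -!card_cut_image -(card_in_imset (f := fun X : {set {set 'I_N}} => g @: X)); last first.
  by move=> X Y /cutK cX /cutK cY; apply: imset_g_inj.
apply/subset_leq_card/subsetP => _ /imsetP [_ /imsetP [[i j] + ->] ->].
rewrite inE => /and3P [/= ij Sij Tij]; have [i' [j' [ij' gcut]]] := imset_cut ij.
by apply/imsetP; exists (i', j'); rewrite // inE ij' /= -gcut !imset_f.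
Qed.

Lemma g_adjacent S T : #|S| = K -> #|T| = K -> #|S :&: T| = K.-1 -> #|g S :&: g T| = K.-1.
Proof.
move=> cS cT cST; have cgS := g_card cS; have cgT := g_card cT.
have le_pairs := card_cut_pairs_le S T.
rewrite (card_cut_pairs cS cT) (card_cut_pairs cgS cgT) !cardsU cST cS cT cgS cgT in le_pairs.
have le_gST : #|g S :&: g T| <= K by rewrite -cgS subset_leq_card ?subsetIl.
have ne_gST : #|g S :&: g T| != K.
  apply/eqP => E; have gS_sub : g S \subset g T.
    by apply/setIidPl; apply/eqP; rewrite eqEcard subsetIl /= cgS E.
  have gST : g S = g T by apply/eqP; rewrite eqEcard gS_sub cgS cgT /=.
  by move: cST; rewrite (g_inj cS cT gST) setIid cT; lia.
have le_gSUT : #|g S :|: g T| <= N by have := max_card (g S :|: g T); rewrite card_ord.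
rewrite cardsU cgS cgT in le_gSUT.
(* [m * (N - (K + K - m))], m := #|g S :&: g T|, increases with m and is the lhs at m = K.-1 *)
nia.
Qed.

End InducedMap.
End Cuts.

Section Closure.
Variables (P : Type) (L : (P -> Prop) -> Prop).
Local Notation cl := (closure L).
Local Notation sol := (@set_of_list P).
Implicit Types (X Y S : P -> Prop) (E F G : list P).

Lemma sub_closure X : subset X (cl X).
Proof. by move=> x Xx S _ XS; apply: XS. Qed.

Lemma closure_subspace X : subspace L (cl X).
Proof.
move=> p q pq Xp Xq l Ll lp lq x lx S HS XS.
exact: (HS p q pq (Xp S HS XS) (Xq S HS XS) l Ll lp lq x lx).
Qed.

Lemma closure_min X S : subspace L S -> subset X S -> subset (cl X) S.
Proof. by move=> HS XS x; apply. Qed.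

Lemma closure_sub X Y : subset X (cl Y) -> subset (cl X) (cl Y).
Proof. by apply: closure_min; apply: closure_subspace. Qed.

Lemma closure_mono X Y : subset X Y -> subset (cl X) (cl Y).
Proof. by move=> XY; apply: closure_sub => x /XY; apply: sub_closure. Qed.

Lemma closure_id S : subspace L S -> cl S = S.
Proof.
by move=> HS; rewrite predeqE => x; split; [apply: closure_min | apply: sub_closure].
Qed.

Lemma closure_eq X Y : subset X (cl Y) -> subset Y (cl X) -> cl X = cl Y.
Proof. by move=> XY YX; rewrite predeqE => x; split; apply: closure_sub. Qed.

Lemma closure_set0 : cl (fun _ => False) = (fun _ => False).
Proof. by apply: closure_id => p q _ []. Qed.

Lemma closure_set1 p : cl (fun x => x = p) = (fun x => x = p).
Proof. by apply: closure_id => a b ab Ha Hb; case: ab; rewrite Ha Hb. Qed.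

Definition free F := NoDup F /\ forall f, In f F -> ~ cl (fun y => In y F /\ y <> f) f.

Hypothesis Hex : exchange_axiom L.

Lemma steinitz_exchange E X F : NoDup F ->
  (forall f, In f F -> ~ cl (fun y => X y \/ (In y F /\ y <> f)) f) ->
  (forall f, In f F -> cl (fun y => X y \/ In y E) f) -> length F <= length E.
Proof.
elim: E X F => [|y E0 IH] X F ndF indF spF.
- case: F ndF indF spF => [|f F'] //= ndF indF spF; exfalso.
  apply: (indF f (or_introl erefl)); apply: closure_mono (spF f (or_introl erefl)).
  by move=> z [Xz|[]]; left.
- case: (EM (forall f, In f F -> cl (fun z => X z \/ In z E0) f)) => [H|/existsNP [f]].
    by have /= := IH X F ndF indF H; lia.
  move=> /not_implyP [Ff nf]; set X0 := fun z => X z \/ In z E0.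
  have ny : ~ cl X0 y.
    move=> Hy; apply: nf; apply: (closure_sub (Y := X0)) (spF f Ff).
    by move=> z [Xz|[<-|Ez]] //; apply: sub_closure; [left|right].
  have hy : cl (fun z => X0 z \/ z = f) y.
    apply: Hex => //; apply: closure_mono (spF f Ff).
    by move=> z [Xz|[<-|Ez]]; [left;left|right|left;right].
  have [F1 [F2 EF]] := in_split f F Ff; subst F.
  have nd' := NoDup_remove_1 _ _ _ ndF.
  have nf' := NoDup_remove_2 _ _ _ ndF.
  have IF z : In z (F1 ++ F2) -> In z (F1 ++ f :: F2).
    by rewrite !in_app_iff /=; tauto.
  suff: length (F1 ++ F2) <= length E0 by rewrite !length_app /=; lia.
  apply: (IH (fun z => X z \/ z = f) (F1 ++ F2) nd').
  + move=> f' Hf' Hcl; apply: (indF f' (IF _ Hf')); apply: closure_mono Hcl.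
    move=> z [[Xz|->]|[Hz nz]]; [by left| |by right; split => //; apply: IF].
    right; split; first by apply: in_or_app; right; left.
    by move=> E; subst; apply: nf'.
  + move=> f' Hf'; apply: closure_sub (spF f' (IF _ Hf')).
    move=> z [Xz|[<-|Ez]]; [by apply: sub_closure; left; left| |by apply: sub_closure; right].
    by apply: closure_mono hy => w [[Xw|Ew]|->]; [left;left|right|left;right].
Qed.

Lemma free_length_le E F : free F -> (forall f, In f F -> cl (sol E) f) ->
  length F <= length E.
Proof.
move=> [nd ind] sp; apply: (steinitz_exchange (X := fun _ => False)) nd _ _.
- by move=> f Ff H; apply: (ind f Ff); apply: closure_mono H => z [[]|].
- by move=> f Ff; apply: closure_mono (sp f Ff) => z Hz; right.
Qed.

Lemma free_cons F x : free F -> ~ cl (sol F) x -> free (x :: F).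
Proof.
move=> [nd ind] nx; split.
  by constructor => // Fx; apply: nx; apply: sub_closure.
move=> f [<-|Ff] Hcl.
  by apply: nx; apply: closure_mono Hcl => z [[->|?] nz].
set X0 := fun y => In y F /\ y <> f.
have nf : ~ cl X0 f by apply: ind.
have nx0 : ~ cl X0 x by move=> H; apply: nx; apply: closure_mono H => z [].
have : cl (fun y => X0 y \/ y = f) x.
  by apply: Hex nx0 nf _; apply: closure_mono Hcl => z [[<-|Fz] nz]; [right|left].
by move=> H; apply: nx; apply: closure_mono H => z [[]|->].
Qed.

Lemma free_of_minimal_span S m s : dim L S m -> NoDup s -> length s = m.+1 ->
  cl (sol s) = S -> free s.
Proof.
move=> [_ [_ Hmin]] nd ls Hs; split => // f Ff Hf.
have [s1 [s2 E]] := in_split f s Ff; subst s.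
apply: (Hmin m); first by apply/ltP.
exists (s1 ++ s2); split; first exact: NoDup_remove_1 nd.
split; first by move: ls; rewrite !length_app /=; lia.
rewrite -Hs predeqE => x; split.
  by apply: closure_mono => z; rewrite /set_of_list !in_app_iff /=; tauto.
apply: closure_sub => z Hz; case: (in_elt_inv _ _ _ _ Hz) => [->|{}Hz]; last exact: sub_closure.
by apply: closure_mono Hf => w [Hw nw]; case: (in_elt_inv _ _ _ _ Hw).
Qed.

Lemma dim_free_span S m : dim L S m ->
  exists s, [/\ free s, length s = m.+1 & cl (sol s) = S].
Proof.
move=> HS; case: (HS) => _ [[s [nd [ls Hs]]] _].
by exists s; split => //; apply: free_of_minimal_span HS nd ls Hs.
Qed.

Lemma closure_free_dim S m F : dim L S m -> free F -> length F = m.+1 ->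
  (forall x, In x F -> S x) -> cl (sol F) = S.
Proof.
move=> HS HF lF FS; have [s [Is ls Hs]] := dim_free_span HS.
rewrite predeqE => x; split; first by apply: closure_min => //; case: HS.
rewrite -Hs; apply: closure_sub => z sz; apply: contrapT => nz.
have : length (z :: F) <= length s.
  apply: free_length_le (free_cons HF nz) _ => w [<-|Fw]; first exact: sub_closure.
  by rewrite Hs; apply: FS.
by rewrite /= lF ls; lia.
Qed.

Lemma dim_closure_free F m : free F -> length F = m.+1 -> dim L (cl (sol F)) m.
Proof.
move=> HF lF; split; first exact: closure_subspace.
split; first by exists F; split => //; case: HF.
move=> j /ltP jlt [s [nd [ls Hs]]].
have : length F <= length s by apply: free_length_le => // f Ff; rewrite Hs; apply: sub_closure.
lia.
Qed.

Lemma dim_exists_outside S m u : dim L S m -> NoDup u -> (forall x, In x u -> S x) ->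
  length u = m -> exists a, S a /\ ~ cl (sol u) a.
Proof.
move=> [HS [_ Hmin]] nd uS lu; apply: contrapT => /forallNP none.
apply: (Hmin m); first by apply/ltP.
exists u; do 2!split => //.
rewrite predeqE => x; split; first exact: closure_min.
by move=> Sx; apply: contrapT => nx; apply: (none x).
Qed.

Variable n : nat.
Hypothesis Hdim : ndim L n.

Lemma free_length_max F : free F -> length F <= n.+1.
Proof.
case: Hdim => _ [[s0 [_ [<- Hs]]] _] HF.
by apply: free_length_le => // f _; rewrite Hs.
Qed.

Lemma spanning_length_min F : NoDup F -> cl (sol F) = (fun _ => True) -> n.+1 <= length F.
Proof.
move=> nd HF; case: Hdim => _ [_ Hmin]; rewrite leqNgt; apply/negP => Hlt.
by apply: (Hmin (length F)); [apply/ltP | exists F].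
Qed.

Lemma free_extend F : free F -> exists G, [/\ NoDup G, incl F G,
  cl (sol G) = (fun _ => True) & length G = n.+1].
Proof.
have spanning G : free G -> (forall x, cl (sol G) x) -> exists G', [/\ NoDup G', incl G G',
    cl (sol G') = (fun _ => True) & length G' = n.+1].
  move=> HG H; have E : cl (sol G) = (fun _ => True) by rewrite predeqE.
  exists G; split; [by case: HG | exact: incl_refl | done |].
  by have := spanning_length_min HG.1 E; have := free_length_max HG; lia.
move=> HF; move: {2}(n.+1 - length F) (leqnn (n.+1 - length F)) => d.
elim: d F HF => [|d IH] F HF Hd.
all: case: (EM (forall x, cl (sol F) x)) => [|/existsNP [x nx]]; first by apply: spanning.
- by have /= := free_length_max (free_cons HF nx); have := free_length_max HF; lia.
- have [|G [ndG FG spG lG]] := IH (x :: F) (free_cons HF nx); first by rewrite /=; lia.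
  by exists G; split => // z Fz; apply: FG; right.
Qed.
End Closure.

Lemma third_point P (L : (P -> Prop) -> Prop) x y : linear_space L -> axiom_P2 L -> x <> y ->
  exists l c, [/\ L l, l x, l y, l c & c <> x /\ c <> y].
Proof.
move=> [_ [_ line]] P2 xy; have [l [Ll [lx [ly _]]]] := line _ _ xy.
have [p [q [r [lp [lq [lr [pq [pr qr]]]]]]]] := P2 l Ll.
exists l; apply: contrapT => /forallNP none.
have on_xy z : l z -> z = x \/ z = y.
  by move=> lz; apply: contrapT => /not_orP [zx zy]; apply: (none z).
by move: (on_xy p lp) (on_xy q lq) (on_xy r lr) => [] ? [] ? [] ?; congruence.
Qed.

Section IndexedBases.
Variables (P : Type) (L : (P -> Prop) -> Prop) (n : nat).
Local Notation cl := (closure L).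
Local Notation sol := (@set_of_list P).
Implicit Types (B : 'I_n.+1 -> P) (i j m : 'I_n.+1) (J : {set 'I_n.+1}).

Definition img B J : P -> Prop := fun x => exists2 i, i \in J & B i = x.
Definition span B J := cl (img B J).
Definition pts B J := map B (enum J).

Record indexed_base B : Prop := IndexedBase {
  ib_inj : injective B;
  ib_span : forall x, span B setT x }.

Lemma In_pts B J x : In x (pts B J) <-> img B J x.
Proof.
rewrite /pts in_map_iff; split; first by case=> i [<- /InP]; rewrite mem_enum; exists i.
by case=> i iJ <-; exists i; split => //; apply/InP; rewrite mem_enum.
Qed.

Lemma set_of_pts B J : sol (pts B J) = img B J.
Proof. by rewrite predeqE => x; apply: In_pts. Qed.

Lemma length_pts B J : length (pts B J) = #|J|.
Proof. by rewrite /pts length_map cardE; elim: (enum J) => //= x s ->. Qed.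

Lemma NoDup_pts B J : injective B -> NoDup (pts B J).
Proof.
move=> Binj; apply: FinFun.Injective_map_NoDup; first by move=> x y /Binj.
exact/uniq_NoDup/enum_uniq.
Qed.

Lemma span_subset B J1 J2 : J1 \subset J2 -> subset (span B J1) (span B J2).
Proof.
by move=> J12; apply: closure_mono => _ [i iJ <-]; exists i => //; apply: (subsetP J12).
Qed.

Hypothesis Hex : exchange_axiom L.
Hypothesis Hdim : ndim L n.

Lemma ib_free B i : indexed_base B -> ~ span B (setT :\ i) (B i).
Proof.
move=> [Binj Bspan] Bi.
have Hs : cl (sol (pts B setT)) = (fun _ => True).
  by rewrite set_of_pts predeqE => x; split => // _; apply: Bspan.
have [_ free] : free L (pts B setT).
  by apply: free_of_minimal_span Hdim (NoDup_pts _ Binj) _ Hs; rewrite length_pts cardsT card_ord.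
apply: (free (B i)); first by apply/In_pts; exists i.
apply: closure_mono Bi => _ [m /setD1P [mi _] <-]; split; first by apply/In_pts; exists m.
by move/Binj/eqP; rewrite (negbTE mi).
Qed.

Lemma free_pts B J : indexed_base B -> free L (pts B J).
Proof.
move=> HB; split; first exact/NoDup_pts/(ib_inj HB).
move=> _ /In_pts [i iJ <-] Bi; apply: (ib_free HB); apply: closure_mono Bi.
move=> _ [/In_pts [m mJ <-] mi]; exists m => //; rewrite !inE andbT.
by apply/eqP => E; apply: mi; rewrite E.
Qed.

Lemma span_dim B J d : indexed_base B -> #|J| = d.+1 -> dim L (span B J) d.
Proof.
move=> HB cJ; rewrite /span -set_of_pts.
by apply: dim_closure_free => //; [exact: free_pts | rewrite length_pts].
Qed.

Lemma span_mem B J i : indexed_base B -> span B J (B i) -> i \in J.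
Proof.
move=> HB Bi; apply/negPn/negP => iJ; apply: (ib_free HB); apply: closure_mono Bi.
by move=> _ [m mJ <-]; exists m; rewrite // !inE andbT; apply: contraNneq iJ => <-.
Qed.

Lemma span_inj B J1 J2 : indexed_base B -> span B J1 = span B J2 -> J1 = J2.
Proof.
move=> HB E; apply/setP => i; apply/idP/idP => iJ; apply: (span_mem HB).
- by rewrite -E; apply: sub_closure; exists i.
- by rewrite E; apply: sub_closure; exists i.
Qed.

Lemma span_setT B : indexed_base B -> span B setT = (fun _ => True).
Proof. by move=> HB; rewrite predeqE => x; split => // _; apply: ib_span. Qed.

Lemma span_setI B J1 J2 : indexed_base B ->
  (fun x => span B J1 x /\ span B J2 x) = span B (J1 :&: J2).
Proof.
move=> HB; rewrite predeqE => x; split; last first.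
  by move=> H; split; apply: (span_subset _ H); [exact: subsetIl | exact: subsetIr].
case=> + H2; move: {2}#|J1 :\: J2| (leqnn #|J1 :\: J2|) => d.
elim: d J1 => [|d IH] J1 Hd H1.
  by have /setIidPl -> : J1 \subset J2 by rewrite -setD_eq0 -cards_eq0; lia.
have [/setIidPl -> //|/subsetPn [u uJ1 uJ2]] := boolP (J1 \subset J2).
have u_new : ~ span B (J1 :\ u) (B u) by move/(span_mem HB); rewrite !inE eqxx.
case: (EM (span B (J1 :\ u) x)) => [Hx|nx].
  apply: (span_subset (J1 := (J1 :\ u) :&: J2)); first by apply/setSI/subD1set.
  apply: IH Hx; have E : (J1 :\: J2) :\ u = J1 :\ u :\: J2.
    by apply/setP => z; rewrite !inE; case: (z == u); case: (z \in J2).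
  have uD : u \in J1 :\: J2 by rewrite inE uJ1 uJ2.
  by have := cardsD1 u (J1 :\: J2); rewrite uD E; lia.
(* [x] lies in the span of [J1] but not of [J1 :\ u]: exchange [x] for [B u] *)
have : cl (fun y => img B (J1 :\ u) y \/ y = x) (B u).
  apply: Hex u_new nx _; apply: closure_mono H1 => _ [m mJ1 <-].
  case: (eqVneq m u) => [->|mu]; [by right | by left; exists m; rewrite // !inE mu].
move/(closure_sub (Y := img B (J1 :\ u :|: J2))) => Bu.
have : u \in J1 :\ u :|: J2.
  apply: (span_mem HB); apply: Bu => _ [[m mJ <-]|->].
    by apply: sub_closure; exists m; rewrite // inE mJ.
  exact: (span_subset (subsetUr _ _) H2).
by rewrite !inE eqxx (negbTE uJ2).
Qed.

Lemma card_span_dim B J d : indexed_base B -> dim L (span B J) d -> #|J| = d.+1.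
Proof.
move=> HB HS; have [s [Is ls Hs]] := dim_free_span HS.
apply/eqP; rewrite eqn_leq -(length_pts B J) -ls; apply/andP; split.
- apply: (free_length_le Hex); first exact: free_pts.
  by move=> f /In_pts Jf; rewrite Hs; apply: sub_closure.
- apply: (free_length_le Hex) => // f sf; rewrite set_of_pts -/(span B J) -Hs.
  exact: sub_closure.
Qed.

Lemma base_subset_span B k S : indexed_base B ->
  base_subset L k (img B setT) S <-> exists2 J : {set 'I_n.+1}, #|J| = k.+1 & S = span B J.
Proof.
move=> HB; split; last first.
  move=> [J cJ ->]; split; first exact: span_dim.
  by exists (img B J); split => // _ [i _ <-]; exists i.
move=> [HS [Y [YB HY]]]; set J := [set i | `[< Y (B i) >]].
have EJ : img B J = Y.
  rewrite predeqE => x; split; first by case=> i /[!inE] /asboolP Yi <-.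
  by move=> Yx; have [i _ Ei] := YB x Yx; exists i; rewrite // inE; apply/asboolP; rewrite Ei.
have ES : S = span B J by rewrite /span EJ HY.
by exists J => //; apply: card_span_dim HB _; rewrite -ES.
Qed.

Lemma indexed_base_base B : indexed_base B -> base L (img B setT).
Proof.
move=> HB; split; last exact: span_setT.
move=> [Y [YB [[_ [[m _ <-] nYm]] EY]]].
apply: (ib_free (i := m) HB); have : cl Y (B m) by rewrite EY; apply: ib_span.
apply: closure_mono => y Yy; have [m' _ Em'] := YB y Yy; exists m' => //.
by rewrite !inE andbT; apply/eqP => mm'; apply: nYm; rewrite -mm' Em'.
Qed.

Lemma indexed_base_of_list G : NoDup G -> length G = n.+1 ->
  cl (sol G) = (fun _ => True) -> exists B, indexed_base B /\ img B setT = sol G.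
Proof.
case: G => [|x0 G0] // nd lG spG; set G := x0 :: G0 in nd lG spG *.
exists (fun i : 'I_n.+1 => List.nth i G x0).
have imgG : img (fun i => List.nth i G x0) setT = sol G.
  rewrite predeqE => x; split; first by case=> i _ <-; apply: nth_In; rewrite lG; apply/ltP.
  move=> /(In_nth _ _ x0) [m [/ltP + <-]]; rewrite lG => mn.
  by exists (Ordinal mn).
split => //; split; last by move=> x; rewrite /span imgG spG.
move=> i j Eij; apply: val_inj; apply: ((NoDup_nth G x0).1 nd i j _ _ Eij); rewrite lG; exact/ltP.
Qed.

Lemma base_indexed X : base L X -> exists B, indexed_base B /\ img B setT = X.
Proof.
move=> [HX spX].
have free_in F : NoDup F -> (forall x, In x F -> X x) -> free L F.
  move=> nd FX; split => // f Ff Hf; apply: HX.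
  exists (fun z => X z /\ z <> f); split; first by move=> z [].
  split; first by exists f; split; [apply: FX | case].
  rewrite predeqE => x; split; first by apply: closure_mono => z [].
  apply: closure_sub => z Xz; case: (EM (z = f)) => [->|nz]; last exact: sub_closure.
  by apply: closure_mono Hf => w [Fw nw]; split => //; apply: FX.
pose Q (d : nat) := `[< exists F, [/\ NoDup F, forall x, In x F -> X x & length F = d] >].
have exQ : exists d, Q d by exists 0; apply/asboolP; exists nil; split => //; constructor.
have ubQ d : Q d -> d <= n.+1.
  move=> /asboolP [F [nd FX <-]]; exact: (free_length_max Hex Hdim (free_in F nd FX)).
case: (ex_maxnP exQ ubQ) => d /asboolP [F [nd FX lF]] Fmax.
have EF : sol F = X.
  rewrite predeqE => x; split; first exact: FX.
  move=> Xx; apply: contrapT => Fx; suff: d.+1 <= d by rewrite ltnn.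
  apply: Fmax; apply/asboolP; exists (x :: F).
  by split => [|z [<-|/FX]|] //=; [constructor | rewrite lF].
have spF : cl (sol F) = (fun _ => True) by rewrite EF.
have [|B [HB EB]] := indexed_base_of_list nd _ spF; last by exists B; rewrite EB.
by have := spanning_length_min Hdim nd spF; have := free_length_max Hex Hdim (free_in F nd FX); lia.
Qed.

Lemma span_set0 B : span B set0 = (fun _ => False).
Proof.
by rewrite -(closure_set0 L) /span; congr cl; rewrite predeqE => x; split => // -[m]; rewrite inE.
Qed.

Lemma span_set1 B i : span B [set i] = (fun x => x = B i).
Proof.
rewrite -(closure_set1 L) /span; congr cl; rewrite predeqE => x.
by split => [[m /set1P -> <-] | ->]; last exists i; rewrite ?set11.
Qed.

Lemma base_point_of_spans B B2 i : indexed_base B -> indexed_base B2 ->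
  (forall j, j != i -> exists J J2, [/\ i \in J, j \notin J & span B J = span B2 J2]) ->
  exists m, B2 m = B i.
Proof.
move=> HB HB2 sep.
have isolate (s : seq 'I_n.+1) : exists J J2,
    [/\ i \in J, {in s, forall j, j != i -> j \notin J} & span B J = span B2 J2].
  elim: s => [|j s [J [J2 [iJ Js EJ]]]]; first by exists setT, setT; rewrite !span_setT // inE.
  case: (eqVneq j i) => [->|ji].
    by exists J, J2; split => // j' /[!in_cons] /orP [/eqP ->|/Js]; rewrite ?eqxx.
  have [J' [J2' [iJ' jJ' EJ']]] := sep j ji.
  exists (J :&: J'), (J2 :&: J2'); split; first by rewrite inE iJ iJ'.
    move=> j' /[!in_cons] /orP [/eqP -> _|/Js H /H]; rewrite inE ?(negbTE jJ') ?andbF //.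
    by move=> /negbTE ->.
  by rewrite -!span_setI // EJ EJ'.
have [J [J2 [iJ Js EJ]]] := isolate (enum 'I_n.+1).
have Ji : J = [set i].
  apply/setP => z; rewrite inE; case: (eqVneq z i) => [->|zi] //.
  by apply/negbTE/Js; rewrite ?mem_enum.
rewrite Ji span_set1 in EJ; have Bi : span B2 J2 (B i) by rewrite -EJ.
have [J20|[m mJ2]] := set_0Vmem J2; first by move: Bi; rewrite J20 span_set0.
exists m; have : span B2 J2 (B2 m) by apply: sub_closure; exists m.
by rewrite -EJ.
Qed.

Lemma img_setT_eq B B2 : indexed_base B -> indexed_base B2 ->
  (forall i, img B2 setT (B i)) -> img B2 setT = img B setT.
Proof.
move=> HB HB2 BB2; rewrite predeqE => x; split; last by case=> i _ <-; apply: BB2.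
case=> m _ <-; apply: contrapT => nm; apply: (ib_free (i := m) HB2).
apply: closure_mono (ib_span HB (B2 m)) => _ [i _ <-].
have [m' _ Em'] := BB2 i; exists m' => //; rewrite !inE andbT.
by apply/eqP => E; apply: nm; exists i; rewrite // -Em' E.
Qed.
Lemma adjacent_common_base k S T : 0 < k -> adjacent L k S T ->
  exists B, [/\ indexed_base B, base_subset L k (img B setT) S & base_subset L k (img B setT) T].
Proof.
move=> k0 [HS [HT HST]].
have [u [Iu lu Hu]] := dim_free_span HST; rewrite prednK // in lu.
have uST x : In x u -> S x /\ T x.
  move=> ux; have : cl (sol u) x by apply: sub_closure.
  by rewrite Hu.
have [a [Sa na]] := dim_exists_outside HS Iu.1 (fun x ux => (uST x ux).1) lu.
have [b [Tb nb]] := dim_exists_outside HT Iu.1 (fun x ux => (uST x ux).2) lu.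
have ES : cl (sol (a :: u)) = S.
  apply: (closure_free_dim Hex HS (free_cons Hex Iu na)); first by rewrite /= lu.
  by move=> x [<-|/uST []].
have ET : cl (sol (b :: u)) = T.
  apply: (closure_free_dim Hex HT (free_cons Hex Iu nb)); first by rewrite /= lu.
  by move=> x [<-|/uST []].
have nba : ~ cl (sol (a :: u)) b by rewrite ES => Sb; apply: nb; rewrite Hu.
have [G [ndG uG spG lG]] := free_extend Hex Hdim (free_cons Hex (free_cons Hex Iu na) nba).
have [B [HB EB]] := indexed_base_of_list ndG lG spG.
have in_base c s : incl (c :: s) (b :: a :: u) -> subset (sol (c :: s)) (img B setT).
  by move=> cs x /cs /uG Gx; rewrite EB.
exists B; split => //; split => //.
- by exists (sol (a :: u)); split => //; apply: in_base => x /= [<-|ux]; right; [left | right].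
- by exists (sol (b :: u)); split => //; apply: in_base => x /= [<-|ux]; [left | right; right].
Qed.

Lemma indexed_base_eta B i c : indexed_base B -> ~ span B (setT :\ i) c ->
  indexed_base [eta B with i |-> c].
Proof.
move=> HB nc; have Bm m : m != i -> span B (setT :\ i) (B m).
  by move=> mi; apply: sub_closure; exists m; rewrite // !inE mi.
split.
  move=> m1 m2; rewrite /=; case: eqVneq => [->|m1i]; case: eqVneq => [->|m2i] //.
  - by move=> E; case: nc; rewrite E; apply: Bm.
  - by move=> E; case: nc; rewrite -E; apply: Bm.
  - exact: (ib_inj HB).
have Bi : span [eta B with i |-> c] setT (B i).
  have : cl (fun y => img B (setT :\ i) y \/ y = B i) c.
    apply: closure_mono (ib_span HB c) => _ [m _ <-].
    by case: (eqVneq m i) => [->|mi]; [right | left; exists m; rewrite // !inE mi].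
  move/(Hex (ib_free HB) nc); apply: closure_mono => _ [[m /setD1P [mi _] <-]|->].
    by exists m; rewrite ?in_setT //= (negbTE mi).
  by exists i; rewrite ?in_setT //= eqxx.
move=> x; apply: closure_sub (ib_span HB x) => _ [m _ <-].
case: (eqVneq m i) => [->|mi] //; apply: sub_closure.
by exists m; rewrite ?in_setT //= (negbTE mi).
Qed.

Lemma base_swap B i j : linear_space L -> axiom_P2 L -> indexed_base B -> i != j ->
  exists B2, [/\ indexed_base B2, forall J, (i \in J) ==> (j \in J) -> span B J = span B2 J
    & forall m, B2 i <> B m].
Proof.
move=> HL HP2 HB ij; have Bij : B i <> B j by move/(ib_inj HB)/eqP; rewrite (negbTE ij).
have [l [c [Ll li lj lc [ci cj]]]] := third_point HL HP2 Bij.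
have Zm m : m != i -> span B (setT :\ i) (B m).
  by move=> mi; apply: sub_closure; exists m; rewrite // !inE mi.
have nc : ~ span B (setT :\ i) c.
  move=> Zc; apply: (ib_free (i := i) HB).
  by apply: (closure_subspace cj Zc (Zm j _) Ll lc lj li); rewrite eq_sym.
have B2i : [eta B with i |-> c] i = c by rewrite /= eqxx.
have B2m m : m != i -> [eta B with i |-> c] m = B m by move=> mi; rewrite /= (negbTE mi).
exists [eta B with i |-> c]; split; first exact: indexed_base_eta.
  move=> J; case: (boolP (i \in J)) => /= [iJ jJ|iJ _].
    apply: closure_eq => _ [m mJ <-]; case: (eqVneq m i) => [->|mi].
    - apply: (closure_subspace (p := c) (q := B j)) li => //.
        by apply: sub_closure; exists i; rewrite ?B2i.
      by apply: sub_closure; exists j; rewrite ?B2m // eq_sym.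
    - by apply: sub_closure; exists m; rewrite ?B2m.
    - rewrite B2i; apply: (closure_subspace (p := B i) (q := B j)) lc => //; apply: sub_closure.
        by exists i.
      by exists j.
    - by apply: sub_closure; exists m; rewrite ?B2m.
  rewrite /span; congr cl; rewrite predeqE => x.
  split => -[m mJ <-]; exists m; rewrite // B2m //; by apply: contraNneq iJ => <-.
move=> m; rewrite B2i; case: (eqVneq m i) => [->|/Zm Bm] // cBm.
by apply: nc; rewrite cBm.
Qed.
End IndexedBases.

Section Transfer.
Variables (P : Type) (L : (P -> Prop) -> Prop) (P' : Type) (L' : (P' -> Prop) -> Prop).
Variables (n k : nat) (f : (P -> Prop) -> (P' -> Prop)).
Hypotheses (Hex : exchange_axiom L) (Hex' : exchange_axiom L').
Hypotheses (Hdim : ndim L n) (Hdim' : ndim L' n).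
Hypotheses (k_gt0 : 0 < k) (k_lt : k.+1 + 2 <= n.+1).
Hypotheses (HL : linear_space L) (HP2 : axiom_P2 L).
Hypothesis f_Grass : forall S, Grass L k S -> Grass L' k (f S).
Hypothesis f_inj : forall S T, Grass L k S -> Grass L k T -> f S = f T -> S = T.
Hypothesis f_base : forall X, base L X -> exists X', base L' X' /\
  forall S', base_subset L' k X' S' <-> exists S, base_subset L k X S /\ f S = S'.
Implicit Types (B : 'I_n.+1 -> P) (i j : 'I_n.+1) (J : {set 'I_n.+1}).

Definition transfers B (B' : 'I_n.+1 -> P') := forall S',
  base_subset L' k (img B' setT) S' <-> exists S, base_subset L k (img B setT) S /\ f S = S'.

Lemma transfer_exists B : indexed_base L B -> exists2 B', indexed_base L' B' & transfers B B'.
Proof.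
move=> HB; have [X [HX tX]] := f_base (indexed_base_base Hdim HB).
by have [B' [HB' EX]] := base_indexed Hex' Hdim' HX; exists B'; rewrite // /transfers EX.
Qed.

(* [set0] is a junk value, reached only when [J] is not a (k+1)-set. *)
Definition induced B (B' : 'I_n.+1 -> P') J : {set 'I_n.+1} :=
  odflt set0 [pick J' : {set 'I_n.+1} | (#|J'| == k.+1) && `[< f (span L B J) = span L' B' J' >]].

Section Induced.
Variables (B : 'I_n.+1 -> P) (B' : 'I_n.+1 -> P').
Hypotheses (HB : indexed_base L B) (HB' : indexed_base L' B') (tB : transfers B B').

Lemma inducedP J : #|J| = k.+1 ->
  #|induced B B' J| = k.+1 /\ f (span L B J) = span L' B' (induced B B' J).
Proof.
move=> cJ; have : base_subset L' k (img B' setT) (f (span L B J)).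
  by apply/tB; exists (span L B J); split => //; apply/(base_subset_span Hex Hdim _ _ HB); exists J.
case/(base_subset_span Hex' Hdim' _ _ HB') => J' cJ' EJ'.
rewrite /induced; case: pickP => [J'' /andP [/eqP ? /asboolP] //|none].
by have := none J'; rewrite cJ' eqxx /=; move/asboolPn.
Qed.

Lemma induced_card J : #|J| = k.+1 -> #|induced B B' J| = k.+1.
Proof. by case/inducedP. Qed.

Lemma induced_inj J1 J2 : #|J1| = k.+1 -> #|J2| = k.+1 ->
  induced B B' J1 = induced B B' J2 -> J1 = J2.
Proof.
move=> c1 c2 E; have [_ E1] := inducedP c1; have [_ E2] := inducedP c2.
apply: (span_inj Hdim HB); apply: f_inj; try exact: (span_dim Hex Hdim HB).
by rewrite E1 E2 E.
Qed.
End Induced.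

Lemma transfers_base_subset B B2 (B' : 'I_n.+1 -> P') S : transfers B B' -> transfers B2 B' ->
  base_subset L k (img B2 setT) S -> base_subset L k (img B setT) S.
Proof.
move=> tB tB2 HS; have /tB [S1 [HS1 E]] : base_subset L' k (img B' setT) (f S).
  by apply/tB2; exists S.
by rewrite (f_inj HS.1 HS1.1 (esym E)).
Qed.

Lemma induced_cut B (B' : 'I_n.+1 -> P') :
  indexed_base L B -> indexed_base L' B' -> transfers B B' -> forall i j, i != j ->
  exists i' j', i' != j' /\ forall J, #|J| = k.+1 ->
    J \notin cut k.+1 i j -> induced B B' J \notin cut k.+1 i' j'.
Proof.
move=> HB HB' tB i j ij; apply: contrapT => none.
have bad i' j' : i' != j' -> exists J, [/\ #|J| = k.+1, J \notin cut k.+1 i j &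
    induced B B' J \in cut k.+1 i' j'].
  move=> ij'; apply: contrapT => nJ; apply: none; exists i', j'; split => // J cJ Jc.
  by apply/negP => gJ; apply: nJ; exists J.
have [B2 [HB2 same_span B2new]] := base_swap Hex Hdim HL HP2 HB ij.
have [B2' HB2' tB2] := transfer_exists HB2.
have B'B2' i' : img B2' setT (B' i').
  have [|m Em] := base_point_of_spans Hex' Hdim' HB' HB2' (i := i'); last by exists m.
  move=> j' ji; have [|J [cJ Jc /[!inE] /and3P [_ i'J j'J]]] := bad i' j'; first by rewrite eq_sym.
  have [_ EJ] := inducedP HB HB' tB cJ; rewrite notin_cut // in Jc.
  have : base_subset L' k (img B2' setT) (f (span L B J)).
    apply/tB2; exists (span L B2 J); rewrite -same_span //; split => //.
    by apply/(base_subset_span Hex Hdim _ _ HB2); exists J; rewrite -?same_span.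
  case/(base_subset_span Hex' Hdim' _ _ HB2') => J2 _ E2.
  by exists (induced B B' J), J2; rewrite -EJ E2.
have tB2' : transfers B2 B' by move=> S'; rewrite -(img_setT_eq Hdim' HB' HB2' B'B2'); exact: tB2.
have [|m Em] := base_point_of_spans Hex Hdim HB2 HB (i := i); last exact: (B2new m).
move=> j0 j0i; have ij0 : i != j0 by rewrite eq_sym.
have [J Jc /andP [iJ j0J]] := exists_in_cut (K := k.+1) k_gt0 k_lt ij0 ij0 j0i ij0.
have cJ : #|J| = k.+1 by move: Jc; rewrite inE => /and3P [/eqP].
have : base_subset L k (img B setT) (span L B2 J).
  by apply: transfers_base_subset tB tB2' _; apply/(base_subset_span Hex Hdim _ _ HB2); exists J.
by case/(base_subset_span Hex Hdim _ _ HB) => J2 _ E2; exists J, J2.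
Qed.

Lemma adjacent_transfer S T : adjacent L k S T -> adjacent L' k (f S) (f T).
Proof.
move=> Hadj; have [HS [HT HST]] := Hadj.
have [B [HB /(base_subset_span Hex Hdim _ _ HB) [J1 c1 ES]
             /(base_subset_span Hex Hdim _ _ HB) [J2 c2 ET]]] :=
  adjacent_common_base Hex Hdim k_gt0 Hadj.
have [B' HB' tB] := transfer_exists HB.
have c12 : #|J1 :&: J2| = k.+1.-1.
  by rewrite (card_span_dim Hex Hdim HB (d := k.-1)) ?prednK // -span_setI // -ES -ET.
have [_ E1] := inducedP HB HB' tB c1; have [_ E2] := inducedP HB HB' tB c2.
have := g_adjacent (K := k.+1) k_gt0 k_lt (induced_card HB HB' tB) (induced_inj HB HB' tB)
  (induced_cut HB HB' tB) c1 c2 c12.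
move=> cg12; split; [exact: f_Grass | split; first exact: f_Grass].
by rewrite ES ET E1 E2 span_setI //; apply: span_dim => //; rewrite cg12 prednK.
Qed.
End Transfer.

Unset Implicit Arguments.

Theorem theorem2p5
  (P : Type) (L : (P -> Prop) -> Prop)
  (P' : Type) (L' : (P' -> Prop) -> Prop)
  (n k : nat)
  (HL : linear_space L) (HL' : linear_space L')
  (Hdim : ndim L n) (Hdim' : ndim L' n)
  (Hex : exchange_axiom L) (Hex' : exchange_axiom L')
  (HP2 : axiom_P2 L) (HP2' : axiom_P2 L')
  (Hk0 : (0 < k)%coq_nat) (Hkn : (k < n - 1)%coq_nat)
  (f : (P -> Prop) -> (P' -> Prop))
  (Hmaps : forall S, Grass L k S -> Grass L' k (f S))
  (Hinj : forall S T, Grass L k S -> Grass L k T -> f S = f T -> S = T)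
  (Hbase : forall B, base L B -> exists B', base L' B' /\
      forall S', base_subset L' k B' S' <->
                 exists S, base_subset L k B S /\ f S = S') :
  forall S T, adjacent L k S T -> adjacent L' k (f S) (f T).
Proof.
have k_gt0 : 0 < k by apply/ltP.
have k_lt : k.+1 + 2 <= n.+1 by move/ltP: Hkn; lia.
exact: (adjacent_transfer Hex Hex' Hdim Hdim' k_gt0 k_lt HL HP2 Hmaps Hinj Hbase).
Qed.
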